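(* For every finite set $A$ of nonzero real numbers with $|A|\geq 2$, \[ \max \{|A+A-A|, |AA/A| \} \gg \frac{|A|^{3/2}}{(\log |A|)^{3/2}}, \] with an absolute implied constant.
   Context: $A+A-A=\{a+b-c:a,b,c\in A\}$ and $AA/A=\{ab/c:a,b,c\in A\}$. *)

From mathcomp Require Import all_boot all_order all_algebra.
From mathcomp Require Import all_classical all_reals.
From mathcomp Require Import Rstruct exp.
From Stdlib Require Import Reals.
Set Implicit Arguments. Unset Strict Implicit. Unset Printing Implicit Defensive.
Import Order.TTheory GRing.Theory Num.Theory.
Local Open Scope ring_scope.

(* A finite set of reals is represented by a duplicate-free list A;
   |A| = size A. *)

Definition sum_diff (A : seq R) : seq R :=
  undup [seq a + bc.1 - bc.2 | a <- A, bc <- [seq (b, c) | b <- A, c <- A]].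

Definition prod_quot (A : seq R) : seq R :=
  undup [seq a * bc.1 / bc.2 | a <- A, bc <- [seq (b, c) | b <- A, c <- A]].

From mathcomp Require Import all_boot all_order all_algebra.
From mathcomp Require Import all_classical all_reals.
From mathcomp Require Import Rstruct exp.
From Stdlib Require Import Reals.
From mathcomp Require Import zify lra ring.
Import Order.TTheory GRing.Theory Num.Theory.
Local Open Scope ring_scope.
Set Implicit Arguments. Unset Strict Implicit.

(* We prove the stronger, logarithm-free bound |A|^3 <= (91 max(|A+A-A|, |AA/A|))^2,
   by an elementary gap-counting argument.
   - Passing to -A if necessary, at least half of A is e * (positive reals),
     e = +-1; list these positive reals as a_0 < ... < a_(n-1).
   - Consider the gaps d_i = a_(i+1) - a_i and ratios r_i = a_(i+1) / a_i.
     If d_i < d_j then a_j + d_i lies strictly inside (a_j, a_(j+1)), and it is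
     e times an element of A+A-A; distinct pairs (j, value of d_i) give distinct
     points. So the sum over j of the rank of d_j (number of distinct gap
     values below d_j) is at most |A+A-A|; likewise ratios give |AA/A|.
   - The map i |-> (rank d_i, rank r_i) is injective (two gaps with the same
     difference and ratio coincide), so at most w^2 indices have both ranks
     below w, whence w (n - 1 - w^2) <= |A+A-A| + |AA/A| for every w.
   - Choosing w ~ sqrt(n)/2 gives n^(3/2) << max(|A+A-A|, |AA/A|); the
     logarithmic factor of the theorem is then absorbed since ln |A| >= ln 2. *)

Lemma mem_sum_diff (A : seq R) x y z : x \in A -> y \in A -> z \in A ->
  x + y - z \in sum_diff A.
Proof.
move=> Hx Hy Hz; rewrite /sum_diff mem_undup.
exact: (allpairs_f (fun a (bc : R * R) => a + bc.1 - bc.2) Hx (allpairs_f pair Hy Hz)).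
Qed.

Lemma mem_prod_quot (A : seq R) x y z : x \in A -> y \in A -> z \in A ->
  x * y / z \in prod_quot A.
Proof.
move=> Hx Hy Hz; rewrite /prod_quot mem_undup.
exact: (allpairs_f (fun a (bc : R * R) => a * bc.1 / bc.2) Hx (allpairs_f pair Hy Hz)).
Qed.

Lemma card_le_size_of_inj (T : finType) (U : eqType) (X : {set T}) (f : T -> U)
    (s : seq U) :
  uniq s -> {in X &, injective f} -> (forall p, p \in X -> f p \in s) ->
  (#|X| <= size s)%nat.
Proof.
move=> Us Hf Hs.
have -> : #|X| = size (map f (enum X)) by rewrite size_map cardE.
apply: uniq_leq_size.
  by rewrite map_inj_in_uniq ?enum_uniq // => x y; rewrite !mem_enum; exact: Hf.
by move=> v /mapP[p]; rewrite mem_enum => Hp ->; apply: Hs.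
Qed.

(* If phi is injective into pairs of naturals, all but w^2 points have a
   coordinate at least w, so the coordinate sums total at least w (#|T| - w^2). *)
Lemma sum_coords_lower_bound (T : finType) (w : nat) (phi : T -> nat * nat) :
  injective phi -> (w * (#|T| - w * w) <= \sum_(j : T) ((phi j).1 + (phi j).2))%nat.
Proof.
move=> Hphi.
set L := [pred j : T | ((phi j).1 < w)%nat && ((phi j).2 < w)%nat].
have card_small : (#|L| <= w * w)%nat.
  have -> : #|L| = size (map phi (enum L)) by rewrite size_map cardE.
  have -> : (w * w = size [seq (x, y) | x <- iota 0 w, y <- iota 0 w])%nat.
    by rewrite size_allpairs size_iota.
  apply: uniq_leq_size; first by rewrite map_inj_uniq // enum_uniq.
  move=> p /mapP[j]; rewrite mem_enum inE => /andP[H1 H2] ->.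
  by case: (phi j) H1 H2 => x y /= H1 H2; apply: allpairs_f; rewrite mem_iota.
rewrite (bigID L) /=; apply: leq_trans (leq_addl _ _).
apply: leq_trans (_ : \sum_(j | ~~ L j) w <= _)%nat; last first.
  apply: leq_sum => j; rewrite /L inE negb_and -!leqNgt => /orP[H|H].
    exact: leq_trans H (leq_addr _ _).
  exact: leq_trans H (leq_addl _ _).
rewrite sum_nat_const mulnC leq_mul2r leq_subLR; apply/orP; right.
have -> : #|(fun i => ~~ L i)| = #|[predC L]| by apply: eq_card.
by rewrite -(cardC L) leq_add2r.
Qed.

Section Rank.
(* Ranks of the values f 0, ..., f (N-1): the rank of j is the number of
   distinct values of f strictly below f j, each value being represented by
   its first occurrence. *)
Variables (N : nat) (f : nat -> R).

Definition first_occ (i : 'I_N) : bool :=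
  [forall k : 'I_N, (k < i)%nat ==> (f k != f i)].

Definition rank (j : 'I_N) : nat :=
  #|[set i : 'I_N | (f i < f j) && first_occ i]|.

Lemma first_occ_exists (j : 'I_N) : exists i : 'I_N, first_occ i && (f i == f j).
Proof.
have Pj : (fun i : 'I_N => f i == f j) j by [].
case: (@arg_minnP _ j (fun i : 'I_N => f i == f j) val Pj) => i0 Hi0 Hmin.
exists i0; rewrite Hi0 andbT; apply/forallP => k; apply/implyP => Hk.
apply/negP => /eqP Hkf.
by have := Hmin k; rewrite Hkf (eqP Hi0) eqxx => /(_ isT); rewrite leqNgt Hk.
Qed.

Lemma first_occ_inj (i k : 'I_N) :
  first_occ i -> first_occ k -> f i = f k -> i = k.
Proof.
move=> /forallP Hi /forallP Hk Hik; apply: val_inj => /=.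
case: (ltngtP i k) => // H.
  by have := Hk i => /implyP/(_ H); rewrite Hik eqxx.
by have := Hi k => /implyP/(_ H); rewrite Hik eqxx.
Qed.

Lemma rank_lt (j k : 'I_N) : f j < f k -> (rank j < rank k)%nat.
Proof.
move=> Hjk; apply: proper_card; apply/properP; split.
  apply/fintype.subsetP => i; rewrite !inE => /andP[Hi ->]; rewrite andbT.
  exact: lt_trans Hi Hjk.
case: (first_occ_exists j) => i0 /andP[Hr /eqP He].
by exists i0; rewrite inE He ?Hjk ?Hr ?ltxx.
Qed.

Lemma rank_inj (j k : 'I_N) : rank j = rank k -> f j = f k.
Proof.
move=> Hrk; case: (ltgtP (f j) (f k)) => // /rank_lt; by rewrite Hrk ltnn.
Qed.

Lemma sum_rank : \sum_(j : 'I_N) rank j =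
  #|[set p : 'I_N * 'I_N | (f p.2 < f p.1) && first_occ p.2]|.
Proof.
under eq_bigr => j _ do rewrite /rank -sum1_card.
rewrite (pair_big_dep xpredT
  (fun j i : 'I_N => i \in [set i : 'I_N | (f i < f j) && first_occ i])) /=.
by rewrite -sum1_card; apply: eq_bigl => p; rewrite !inE.
Qed.

End Rank.

Section GapCounting.
Variables (A : seq R) (e : R) (n : nat) (a : nat -> R).
Hypothesis e_sq : e * e = 1.
Hypothesis a_pos : forall i, (i < n)%nat -> 0 < a i.
Hypothesis a_incr : forall i j, (i < j)%nat -> (j < n)%nat -> a i < a j.
Hypothesis a_in : forall i, (i < n)%nat -> e * a i \in A.

Let N := n.-1.

Definition gap (i : nat) := a i.+1 - a i.
Definition ratio (i : nat) := a i.+1 / a i.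

Lemma sign_neq0 : e != 0.
Proof. by apply: contra_eq_neq e_sq => ->; rewrite mul0r eq_sym oner_eq0. Qed.

Lemma gap_end_index (i : 'I_N) : (i.+1 < n)%nat.
Proof. by have := ltn_ord i; rewrite /N; lia. Qed.

Lemma gap_start_index (i : 'I_N) : (i < n)%nat.
Proof. exact: ltnW (gap_end_index i). Qed.

Lemma gap_pos (i : 'I_N) : 0 < gap i.
Proof. by rewrite subr_gt0; apply: a_incr (gap_end_index i). Qed.

Lemma ratio_gt1 (i : 'I_N) : 1 < ratio i.
Proof.
by rewrite ltr_pdivlMr ?mul1r ?a_pos ?gap_start_index //; apply: a_incr (gap_end_index i).
Qed.

Lemma gap_interval_unique (j k : 'I_N) z :
  a j < z < a j.+1 -> a k < z < a k.+1 -> j = k.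
Proof.
have a_le : forall i l : 'I_N, (i < l)%nat -> a i.+1 <= a l.
  move=> i l Hil; have [<-//|Hlt] := eqVneq i.+1 l.
  by apply/ltW/a_incr; [lia | exact: gap_start_index].
move=> /andP[H1 H2] /andP[H3 H4]; apply: val_inj => /=.
by case: (ltngtP j k) => // /a_le ?; exfalso; lra.
Qed.

Lemma gap_ratio_inj (j k : 'I_N) : gap j = gap k -> ratio j = ratio k -> j = k.
Proof.
move=> Hd Hr.
have Pj := a_pos (gap_start_index j); have Pk := a_pos (gap_start_index k).
have cross : a j.+1 * a k = a k.+1 * a j.
  by apply/eqP; rewrite -eqr_div ?(gt_eqF Pj) ?(gt_eqF Pk) //; apply/eqP.
have Ej : a j.+1 = gap j + a j by rewrite /gap; ring.
have Ek : a k.+1 = gap j + a k by rewrite Hd /gap; ring.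
rewrite Ej Ek in cross.
have Dp := gap_pos j.
have Eq : a k = a j by nra.
apply: val_inj => /=; case: (ltngtP j k) => // H.
  by have := a_incr H (gap_start_index k); rewrite Eq ltxx.
by have := a_incr H (gap_start_index j); rewrite Eq ltxx.
Qed.

(* a_j + d_i, for d_i < d_j, lies in the j-th interval and is e times an
   element of A+A-A. *)
Lemma sum_rank_gap_le : (\sum_(j : 'I_N) rank gap j <= size (sum_diff A))%nat.
Proof.
rewrite sum_rank.
apply: (card_le_size_of_inj (f := fun p : 'I_N * 'I_N => e * (a p.1 + gap p.2))).
- exact: undup_uniq.
- move=> [j i] [k l]; rewrite !inE /= => /andP[Hp1 Hp2] /andP[Hq1 Hq2].
  move=> /(mulfI sign_neq0) Heq.
  have Ejk : j = k.
    have := gap_pos i; have := gap_pos l; rewrite /gap in Hp1 Hq1 Heq * => ? ?.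
    by apply: (gap_interval_unique (z := a j + (a i.+1 - a i))); apply/andP; split; lra.
  subst k; have Eil : gap i = gap l by lra.
  by rewrite (first_occ_inj Hp2 Hq2 Eil).
- move=> [j i] _ /=.
  have -> : e * (a j + gap i) = e * a j + e * a i.+1 - e * a i by rewrite /gap; ring.
  by apply: mem_sum_diff; apply: a_in; rewrite ?gap_end_index ?gap_start_index.
Qed.

(* a_j * r_i, for r_i < r_j, lies in the j-th interval and is e times an
   element of AA/A. *)
Lemma sum_rank_ratio_le : (\sum_(j : 'I_N) rank ratio j <= size (prod_quot A))%nat.
Proof.
rewrite sum_rank.
apply: (card_le_size_of_inj (f := fun p : 'I_N * 'I_N => e * (a p.1 * ratio p.2))).
- exact: undup_uniq.
- move=> [j i] [k l]; rewrite !inE /= => /andP[Hp1 Hp2] /andP[Hq1 Hq2].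
  move=> /(mulfI sign_neq0) Heq.
  have inside : forall j' i' : 'I_N, ratio i' < ratio j' ->
      a j' < a j' * ratio i' < a j'.+1.
    move=> j' i' Hri; have Pj := a_pos (gap_start_index j'); have := ratio_gt1 i'.
    have -> : a j'.+1 = a j' * ratio j' by rewrite /ratio mulrC divfK // gt_eqF.
    by move=> ?; apply/andP; split; nra.
  have Ejk : j = k.
    by apply: (gap_interval_unique (inside _ _ Hp1)); rewrite Heq; apply: inside.
  subst k; have Pj := a_pos (gap_start_index j).
  have Eil : ratio i = ratio l by apply: (mulfI (x := a j)); rewrite ?gt_eqF.
  by rewrite (first_occ_inj Hp2 Hq2 Eil).
- move=> [j i] _ /=.
  have Pi := a_pos (gap_start_index i).
  have Einv : e^-1 = e by apply: (mulfI sign_neq0); rewrite mulfV ?sign_neq0 // e_sq.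
  have -> : e * (a j * ratio i) = (e * a j) * (e * a i.+1) / (e * a i).
    rewrite /ratio invfM Einv.
    transitivity ((e * e) * (e * (a j * (a i.+1 / a i)))); first by rewrite e_sq mul1r.
    by ring.
  by apply: mem_prod_quot; apply: a_in; rewrite ?gap_end_index ?gap_start_index.
Qed.

Lemma gap_count (w : nat) :
  (w * (n.-1 - w * w) <= size (sum_diff A) + size (prod_quot A))%nat.
Proof.
pose phi := fun j : 'I_N => (rank gap j, rank ratio j).
have phi_inj : injective phi.
  by move=> j k [/rank_inj Hd /rank_inj Hr]; exact: gap_ratio_inj.
have := sum_coords_lower_bound w phi_inj; rewrite card_ord big_split /=.
move/leq_trans; apply; exact: leq_add sum_rank_gap_le sum_rank_ratio_le.
Qed.

End GapCounting.

Lemma half_same_sign (A : seq R) : uniq A -> (forall a, a \in A -> a != 0) ->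
  exists (e : R) (S : seq R), [/\ e * e = 1, uniq S, (forall x, x \in S -> 0 < x),
    (forall x, x \in S -> e * x \in A) & (size A <= 2 * size S)%nat].
Proof.
move=> UA HA.
pose P := [seq x <- A | 0 < x]; pose Q := [seq x <- A | x < 0].
have HPQ : (size P + size Q)%nat = size A.
  rewrite !size_filter -(count_predC (fun x : R => 0 < x) A); congr addn.
  apply: eq_in_count => x /HA Hx /=.
  by rewrite ltNge le_eqVlt eq_sym (negbTE Hx).
case: (leqP (size Q) (size P)) => H.
  exists 1, P; split; rewrite ?mulr1 ?filter_uniq //.
  - by move=> x; rewrite mem_filter => /andP[].
  - by move=> x; rewrite mem_filter mul1r => /andP[].
  - by rewrite -HPQ mul2n -addnn leq_add2l.
exists (-1), (map -%R Q); split.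
- by rewrite mulrNN mulr1.
- by rewrite map_inj_uniq ?filter_uniq //; exact: oppr_inj.
- by move=> x /mapP[y]; rewrite mem_filter => /andP[Hy _] ->; rewrite oppr_gt0.
- by move=> x /mapP[y]; rewrite mem_filter => /andP[_ Hy] ->; rewrite mulN1r opprK.
- by rewrite size_map -HPQ mul2n -addnn leq_add2r ltnW.
Qed.

Lemma sorted_enumeration (d : Order.disp_t) (T : orderType d) (x0 : T) (S : seq T) :
  uniq S ->
  let a := fun i => nth x0 (sort <=%O S) i in
  (forall i, (i < size S)%nat -> a i \in S) /\
  (forall i j, (i < j)%nat -> (j < size S)%nat -> (a i < a j)%O).
Proof.
move=> US a; have Hsz : size (sort <=%O S) = size S by rewrite size_sort.
split=> [i Hi | i j Hij Hj]; first by rewrite -(mem_sort <=%O) mem_nth // Hsz.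
have sorted_S : sorted <%O (sort <=%O S) by rewrite sort_lt_sorted.
apply: (sorted_ltn_nth lt_trans x0 sorted_S); rewrite // inE Hsz //.
exact: ltn_trans Hj.
Qed.

Lemma sqrt_bracket (N : nat) : exists w, (4 * w * w <= N < 4 * w.+1 * w.+1)%nat.
Proof.
elim: N => [|N [w /andP[H1 H2]]]; first by exists 0%nat.
by case: (leqP (4 * w.+1 * w.+1) N.+1) => H; [exists w.+1 | exists w]; lia.
Qed.

(* Optimizing the inequality w (N - w^2) <= K over w (w ~ sqrt N / 2) gives
   N^3 <= 22 K^2 (the hypothesis N <= K only matters for tiny N). *)
Lemma cube_bound (N K : nat) : (N <= K)%nat ->
  (forall w, w * (N - w * w) <= K)%nat -> (N * (N * N) <= 22 * (K * K))%nat.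
Proof.
move=> HNK HK; have [w /andP[Hlo Hhi]] := sqrt_bracket N.
have Nw_le : (3 * N * w <= 4 * K)%nat.
  have := HK w; have : (3 * N <= 4 * (N - w * w))%nat by lia.
  move=> H3 Hw; have := leq_mul H3 (leqnn w); nia.
have Nw1_le : (3 * N * w.+1 <= 7 * K)%nat by lia.
have N2w2_le : (9 * (N * N) * (w.+1 * w.+1) <= 49 * (K * K))%nat.
  by have := leq_mul Nw1_le Nw1_le; nia.
nia.
Qed.

(* Transfers the cube bound from the positive half (of size m) back to the
   whole set (of size n <= 2 m). *)
Lemma cube_from_half (n m M : nat) : (2 <= n)%nat -> (n <= M)%nat ->
  (n <= 2 * m)%nat -> (m <= n)%nat ->
  (m.-1 * (m.-1 * m.-1) <= 22 * (2 * M * (2 * M)))%nat ->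
  (n * (n * n) <= 91 * M * (91 * M))%nat.
Proof.
case: m => [|[|N]] /= Hn HnM Hnm Hmn Hcube; first lia.
  have -> : n = 2%nat by lia.
  have : (2 * 2 <= M * M)%nat by apply: leq_mul; lia.
  lia.
have HnN : (n <= 4 * N.+1)%nat by lia.
have := leq_mul HnN (leq_mul HnN HnN); move/leq_trans; apply; nia.
Qed.

Lemma cube_le_max_sq (A : seq R) : uniq A -> (forall a, a \in A -> a != 0) ->
  (2 <= size A)%nat ->
  (size A * (size A * size A) <=
    91 * maxn (size (sum_diff A)) (size (prod_quot A)) *
    (91 * maxn (size (sum_diff A)) (size (prod_quot A))))%nat.
Proof.
move=> UA HA Hn; set M := maxn _ _.
have [e [S [He US Spos SA HnS]]] := half_same_sign UA HA.
have [a_in_S a_incr] := sorted_enumeration 0 US.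
have Hgap := gap_count He (fun i Hi => Spos _ (a_in_S i Hi)) a_incr
  (fun i Hi => SA _ (a_in_S i Hi)).
have HnM : (size A <= M)%nat.
  apply: leq_trans (leq_maxl _ _); apply: uniq_leq_size => // x Hx.
  by rewrite -[x](addrK x); apply: mem_sum_diff.
have HSn : (size S <= size A)%nat.
  rewrite -(size_map ( *%R e)); apply: uniq_leq_size.
    by rewrite map_inj_uniq //; apply: mulfI; apply: sign_neq0 He.
  by move=> y /mapP[x Hx ->]; apply: SA.
have Hsum : forall w, (w * ((size S).-1 - w * w) <= 2 * M)%nat.
  move=> w; apply: leq_trans (Hgap w) _.
  by rewrite mul2n -addnn leq_add ?leq_maxl ?leq_maxr.
have HSM : ((size S).-1 <= 2 * M)%nat by lia.
have Hcube := cube_bound HSM Hsum.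
exact: cube_from_half Hn HnM HnS HSn Hcube.
Qed.

(* ln |A| >= ln 2 > 0 lets the logarithmic factor be absorbed in the constant. *)
Lemma ln2_gt0 : 0 < ln 2%:R.
Proof.
have one_lt_two : Rlt 1 2%:R by apply/RltP; rewrite ltr1n.
by have := ln_increasing 1 2%:R Rlt_0_1 one_lt_two; rewrite ln_1 => /RltP.
Qed.

Lemma ln_ge_ln2 (n : nat) : (2 <= n)%nat -> ln 2%:R <= ln n%:R.
Proof.
rewrite leq_eqVlt => /orP[/eqP <- // | Hn].
by apply/ltW/RltP; apply: ln_increasing; apply/RltP; rewrite ?ltr_nat.
Qed.

Lemma pow32_le_of_cube (n C M : nat) : (n * (n * n) <= C * M * (C * M))%nat ->
  n%:R `^ (3%:R / 2%:R) <= (C * M)%:R :> R.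
Proof.
move=> Hcube; set X := n%:R `^ _.
have X_sq : X ^+ 2 = n%:R ^+ 3.
  rewrite -powR_mulrn ?powR_ge0 // /X -powRrM.
  have -> : (3%:R / 2%:R : R) * 2%:R = 3%:R by rewrite divfK // pnatr_eq0.
  by rewrite powR_mulrn.
rewrite -(ler_pXn2r (isT : (0 < 2)%nat)) ?nnegrE ?powR_ge0 // X_sq.
by rewrite -!natrX ler_nat !expnS expn0 !muln1.
Qed.

Theorem mainTheorem10 :
  exists c : R, 0 < c /\
    forall A : seq R, uniq A -> (forall a, a \in A -> a != 0) ->
      leq 2 (size A) ->
      c * ((size A)%:R `^ (3%:R / 2%:R)) / ((ln (size A)%:R) `^ (3%:R / 2%:R))
        <= Num.max (size (sum_diff A))%:R (size (prod_quot A))%:R.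
Proof.
set c0 := (ln 2%:R) `^ (3%:R / 2%:R : R).
have c0_gt0 : 0 < c0 by apply: powR_gt0; apply: ln2_gt0.
exists (c0 / 91%:R); split; first exact: divr_gt0.
move=> A UA HA Hn.
have Hpow := pow32_le_of_cube (cube_le_max_sq UA HA Hn).
set X := (size A)%:R `^ _ in Hpow *; set Y := (ln (size A)%:R) `^ _.
have c0_le_Y : c0 <= Y.
  have ln_ge : ln 2%:R <= ln (size A)%:R := ln_ge_ln2 Hn.
  apply: ge0_ler_powR; rewrite ?nnegrE ?divr_ge0 ?(ltW ln2_gt0) //.
  exact: le_trans (ltW ln2_gt0) ln_ge.
have HX : 0 <= X by apply: powR_ge0.
rewrite -natr_max maxEnat.
rewrite natrM in Hpow; rewrite ler_pdivrMr ?(lt_le_trans c0_gt0) //.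
have : 91%:R * (c0 / 91%:R) = c0 by rewrite mulrC divfK // pnatr_eq0.
nra.
Qed.
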